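(* Let $\mathcal{H}$ be a Hilbert space, $\{\mathcal{H}_i : i\in I\}$ a sequence of Hilbert spaces ($I\subseteq\mathbb{Z}$), and let $\Lambda=\{\Lambda_i\in\mathcal{L}(\mathcal{H},\mathcal{H}_i): i\in I\}$ be a $g$-frame for $\mathcal{H}$ with $g$-frame operator $S_\Lambda f=\sum_{i\in I}\Lambda_i^*\Lambda_i f$. Let $C,C'\in\mathcal{GL}^+(\mathcal{H})$ be such that $C$ and $C'$ commute with each other and each commutes with $S_\Lambda$. Then $\Lambda$ is a $(C,C')$-controlled $g$-frame for $\mathcal{H}$.
   Context: $\mathcal{L}(\mathcal{H},\mathcal{K})$ denotes the bounded linear operators from $\mathcal{H}$ to $\mathcal{K}$. $\mathcal{GL}^+(\mathcal{H})$ denotes the set of positive bounded operators on $\mathcal{H}$ (i.e. $\langle Tf,f\rangle>0$ for $f\neq 0$) having a bounded inverse. A family $\Lambda=\{\Lambda_i\in\mathcal{L}(\mathcal{H},\mathcal{H}_i)\}_{i\in I}$ is a $g$-frame for $\mathcal{H}$ if there are constants $0<A\le B<\infty$ with $A\|f\|^2\le\sum_{i\in I}\|\Lambda_i f\|^2\le B\|f\|^2$ for all $f\in\mathcal{H}$; it is a $g$-Bessel sequence if the upper inequality holds. For $C,C'\in\mathcal{GL}^+(\mathcal{H})$, $\Lambda$ is a $(C,C')$-controlled $g$-frame if $\Lambda$ is a $g$-Bessel sequence and there exist constants $A>0$, $B<\infty$ such that $A\|f\|^2\le\sum_{i\in I}\langle\Lambda_i Cf,\Lambda_i C'f\rangle\le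 B\|f\|^2$ for all $f\in\mathcal{H}$. *)

From HB Require Import structures.
From mathcomp Require Import all_boot all_order all_algebra.
From mathcomp Require Import reals complex.

Set Implicit Arguments.
Unset Strict Implicit.
Unset Printing Implicit Defensive.

Import Order.TTheory GRing.Theory Num.Theory.
Local Open Scope ring_scope.

Section HilbertDefs.
Variable R : realType.
Local Notation C := R[i].

Record inner_product (V : lmodType C) := InnerProduct {
  ip : V -> V -> C;
  ip_linear : forall (a : C) (x y z : V), ip (a *: x + y) z = a * ip x z + ip y z;
  ip_conj : forall x y : V, ip y x = (ip x y)^*;
  ip_ge0 : forall x : V, 0 <= ip x x;
  ip_eq0 : forall x : V, ip x x = 0 -> x = 0 }.

Definition hnorm (V : lmodType C) (p : inner_product V) (x : V) : R :=
  Num.sqrt (complex.Re (ip p x x)).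

Definition cauchy_seq (V : lmodType C) (nrm : V -> R) (u : nat -> V) :=
  forall e : R, 0 < e -> exists N : nat,
    forall m n : nat, (N <= m)%N -> (N <= n)%N -> nrm (u m - u n) < e.

Definition seq_converges_to (V : lmodType C) (nrm : V -> R) (u : nat -> V) (l : V) :=
  forall e : R, 0 < e -> exists N : nat, forall n : nat, (N <= n)%N -> nrm (u n - l) < e.

Record hilbert (V : lmodType C) := Hilbert {
  hip : inner_product V;
  hcomplete : forall u : nat -> V, cauchy_seq (hnorm hip) u ->
                exists l : V, seq_converges_to (hnorm hip) u l }.

Definition inner (V : lmodType C) (hV : hilbert V) : V -> V -> C := ip (hip hV).
Definition norm_h (V : lmodType C) (hV : hilbert V) : V -> R := hnorm (hip hV).

(* Unconditional summation over an index set I of integers: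
   the net of finite partial sums (over finite subsets of I) converges to s. *)
Definition has_sum (K : numDomainType) (V : zmodType) (nrm : V -> K)
    (I : int -> Prop) (a : int -> V) (s : V) :=
  forall e : K, 0 < e -> exists F0 : seq int, (forall i, i \in F0 -> I i) /\
    forall F : seq int, uniq F -> (forall i, i \in F -> I i) ->
      (forall i, i \in F0 -> i \in F) -> nrm (\sum_(i <- F) a i - s) < e.

Definition bounded_linear (V W : lmodType C) (hV : hilbert V) (hW : hilbert W)
    (T : V -> W) :=
  (forall (a : C) (x y : V), T (a *: x + y) = a *: T x + T y) /\
  exists M : R, forall x : V, norm_h hW (T x) <= M * norm_h hV x.

Definition is_adjoint (V W : lmodType C) (hV : hilbert V) (hW : hilbert W)
    (T : V -> W) (Ts : W -> V) :=
  forall (x : V) (y : W), inner hW (T x) y = inner hV x (Ts y).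

Definition GLplus (H : lmodType C) (hH : hilbert H) (T : H -> H) :=
  bounded_linear hH hH T /\
  (forall f : H, f <> 0 -> 0 < inner hH (T f) f) /\
  exists Ti : H -> H, bounded_linear hH hH Ti /\ cancel T Ti /\ cancel Ti T.

Section GFrames.
Variables (H : lmodType C) (hH : hilbert H) (I : int -> Prop)
  (Hi : int -> lmodType C) (hHi : forall i, hilbert (Hi i))
  (L : forall i, H -> Hi i).

Definition g_bessel :=
  (forall i, I i -> bounded_linear hH (hHi i) (L i)) /\
  exists B : R, forall f : H, exists s : R,
    has_sum (@Num.norm R R) I (fun i => norm_h (hHi i) (L i f) ^+ 2) s /\
    s <= B * norm_h hH f ^+ 2.

Definition g_frame :=
  (forall i, I i -> bounded_linear hH (hHi i) (L i)) /\
  exists A B : R, 0 < A /\ A <= B /\ forall f : H, exists s : R,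
    has_sum (@Num.norm R R) I (fun i => norm_h (hHi i) (L i f) ^+ 2) s /\
    A * norm_h hH f ^+ 2 <= s /\ s <= B * norm_h hH f ^+ 2.

Definition g_frame_operator (S : H -> H) :=
  exists Ls : forall i, Hi i -> H,
    (forall i, I i -> is_adjoint hH (hHi i) (L i) (Ls i)) /\
    forall f : H, has_sum (norm_h hH) I (fun i => Ls i (L i f)) (S f).

Definition controlled_g_frame (Cop C'op : H -> H) :=
  g_bessel /\
  exists A B : R, 0 < A /\ forall f : H, exists s : C,
    has_sum (@Num.norm C C) I
      (fun i => inner (hHi i) (L i (Cop f)) (L i (C'op f))) s /\
    ((A * norm_h hH f ^+ 2)%:C)%C <= s /\ s <= ((B * norm_h hH f ^+ 2)%:C)%C.

End GFrames.
End HilbertDefs.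

From mathcomp Require Import all_boot all_order all_algebra.
From mathcomp Require Import reals complex.
From mathcomp Require Import ring lra.

Set Implicit Arguments.
Unset Strict Implicit.
Unset Printing Implicit Defensive.

Import Order.TTheory GRing.Theory Num.Theory.
Local Open Scope ring_scope.

(* The frame operator S satisfies A <= S <= B, and the controlled sum
   sum_i <L_i C f, L_i C' f> equals <S C C' f, f>; so it suffices to show that
   the product XY of two commuting, self-adjoint, bounded, coercive operators
   is coercive, applied first to S and C, then to SC and C'.
   Instead of square roots we use a continuity argument along the segment
   T_t = (1 - t) X + t XY.  Each T_t = X ((1 - t) + t Y) is self-adjoint,
   bounded by some M and bounded below in norm by some g, uniformly in t, and
   for such an operator positivity already implies coercivity with constant
   c = g^2 / M, because ||T f||^2 <= M <T f, f> by Cauchy-Schwarz.  As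
   <T_t f, f> moves by at most M ||f||^2 per unit of t, positivity propagates
   from T_0 = X to T_1 = XY in finitely many steps of length at most c / M. *)

Local Notation Re := complex.Re.
Local Notation Im := complex.Im.
Local Notation "x %:C" := (real_complex _ x) : ring_scope.

Section ComplexFacts.
Variable R : rcfType.
Implicit Types (a : R) (z w : R[i]).

Lemma ge0_complex_real z : 0 <= z -> z = (Re z)%:C.
Proof. by case: z => a b; rewrite lecE /= => /andP[/eqP -> _]. Qed.

Lemma Re_ge0 z : 0 <= z -> 0 <= Re z.
Proof. by case: z => a b; rewrite lecE /= => /andP[_ ->]. Qed.

Lemma lecRe a z : a%:C <= z -> a <= Re z.
Proof. by case: z => x y; rewrite lecE /= => /andP[_ ->]. Qed.

Lemma ReD z w : Re (z + w) = Re z + Re w.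
Proof. by case: z; case: w. Qed.

Lemma Re_realM a z : Re (a%:C * z) = a * Re z.
Proof. by case: z => x y /=; rewrite mul0r subr0. Qed.

Lemma conj_fixed_real z : z = z^* -> z = (Re z)%:C.
Proof.
case: z => a b /= /eqP; rewrite eq_complex /= => /andP[_ /eqP hb].
by apply/eqP; rewrite eq_complex /= eqxx /=; apply/eqP; lra.
Qed.

Lemma conj_real a : (a%:C)^* = a%:C.
Proof. exact: conjc_real. Qed.

Lemma normc_real a : `|a%:C| = `|a|%:C.
Proof. by rewrite normc_def /= expr0n /= addr0 sqrtr_sqr. Qed.

End ComplexFacts.

Lemma discriminant_le (R : realFieldType) (a b c : R) : 0 <= b -> 0 <= a -> 0 <= c ->
  (forall t, 0 <= t ^+ 2 * b * c - 2 * t * b + a) -> b <= a * c.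
Proof.
move=> b0 a0 c0 quad_ge0; rewrite leNgt; apply/negP => lt_ac_b.
have bp : 0 < b by apply: le_lt_trans lt_ac_b; exact: mulr_ge0.
have [c_eq0|c_neq0] := eqVneq c 0.
  have := quad_ge0 ((a + 1) / (2 * b)); rewrite c_eq0 mulr0 sub0r.
  have -> : 2 * ((a + 1) / (2 * b)) * b = a + 1 by field; rewrite gt_eqF.
  lra.
have cp : 0 < c by rewrite lt_neqAle eq_sym c_neq0.
have := quad_ge0 c^-1.
have -> : c^-1 ^+ 2 * b * c - 2 * c^-1 * b + a = a - b / c by field.
rewrite subr_ge0 ler_pdivrMr //; lra.
Qed.

Section SesquilinearForm.
Variables (R : rcfType) (V : lmodType R[i]) (q : V -> V -> R[i]).
Hypothesis q_linear : forall a x y z, q (a *: x + y) z = a * q x z + q y z.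
Hypothesis q_hermitian : forall x y, q y x = (q x y)^*.

Lemma form0l z : q 0 z = 0.
Proof.
have := q_linear 1 0 0 z; rewrite scaler0 addr0 mul1r => /eqP.
by rewrite -subr_eq0 opprD addrA subrr sub0r oppr_eq0 => /eqP.
Qed.

Lemma formDl x y z : q (x + y) z = q x z + q y z.
Proof. by rewrite -{1}(scale1r x) q_linear mul1r. Qed.

Lemma formZl a x z : q (a *: x) z = a * q x z.
Proof. by rewrite -(addr0 (a *: x)) q_linear form0l addr0. Qed.

Lemma formBl x y z : q (x - y) z = q x z - q y z.
Proof. by rewrite -scaleN1r formDl formZl mulN1r. Qed.

Lemma formDr x y z : q z (x + y) = q z x + q z y.
Proof. by rewrite !(q_hermitian _ z) formDl rmorphD. Qed.

Lemma formZr a x z : q z (a *: x) = a^* * q z x.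
Proof. by rewrite !(q_hermitian _ z) formZl rmorphM. Qed.

Lemma formBr x y z : q z (x - y) = q z x - q z y.
Proof. by rewrite !(q_hermitian _ z) formBl rmorphB. Qed.

Hypothesis q_ge0 : forall x, 0 <= q x x.

Lemma form_Cauchy_Schwarz x y :
  Re (q x y) ^+ 2 + Im (q x y) ^+ 2 <= Re (q x x) * Re (q y y).
Proof.
set b := q x y; set n2 := Re b ^+ 2 + Im b ^+ 2.
apply: discriminant_le; rewrite ?Re_ge0 ?addr_ge0 ?sqr_ge0 // => t.
have := q_ge0 (x - (t%:C * b) *: y).
rewrite formBl !formBr !formZl !formZr rmorphM /= conj_real (q_hermitian x y) -/b.
rewrite {1}(ge0_complex_real (q_ge0 x)) {1}(ge0_complex_real (q_ge0 y)).
rewrite -lecR rmorph0 rmorphD rmorphB !rmorphM rmorph_nat /= /n2 add_Re2_Im2 normCK.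
by congr (_ <= _); ring.
Qed.

End SesquilinearForm.

Lemma le_sqr_ge0 (R : realDomainType) (a b : R) : 0 <= b -> a ^+ 2 <= b ^+ 2 -> a <= b.
Proof. by move=> b0 le_sqr; rewrite leNgt; apply/negP => lt_ba; nra. Qed.

Section InnerProduct.
Variables (R : realType) (V : lmodType R[i]) (hV : hilbert V).
Local Notation "<< x , y >>" := (inner hV x y).
Local Notation nh := (norm_h hV).

Lemma inner_linear a x y z : << a *: x + y, z >> = a * << x, z >> + << y, z >>.
Proof. exact: ip_linear. Qed.

Lemma inner_conj x y : << y, x >> = << x, y >>^*.
Proof. exact: ip_conj. Qed.

Lemma inner_ge0 x : 0 <= << x, x >>.
Proof. exact: ip_ge0. Qed.

Lemma innerDl x y z : << x + y, z >> = << x, z >> + << y, z >>.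
Proof. exact: (formDl inner_linear). Qed.

Lemma innerZl a x z : << a *: x, z >> = a * << x, z >>.
Proof. exact: (formZl inner_linear). Qed.

Lemma innerBl x y z : << x - y, z >> = << x, z >> - << y, z >>.
Proof. exact: (formBl inner_linear). Qed.

Lemma inner0l z : << 0, z >> = 0.
Proof. exact: (form0l inner_linear). Qed.

Lemma innerDr x y z : << z, x + y >> = << z, x >> + << z, y >>.
Proof. exact: (formDr inner_linear inner_conj). Qed.

Lemma innerZr a x z : << z, a *: x >> = a^* * << z, x >>.
Proof. exact: (formZr inner_linear inner_conj). Qed.

Lemma norm_h_ge0 x : 0 <= nh x.
Proof. exact: sqrtr_ge0. Qed.

Lemma norm_h_sqr x : nh x ^+ 2 = Re << x, x >>.
Proof. by rewrite /norm_h /hnorm sqr_sqrtr // Re_ge0 // inner_ge0. Qed.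

Lemma inner_self x : << x, x >> = (nh x ^+ 2)%:C.
Proof. by rewrite norm_h_sqr; apply: ge0_complex_real; exact: inner_ge0. Qed.

Lemma Cauchy_Schwarz_sqr x y :
  Re << x, y >> ^+ 2 + Im << x, y >> ^+ 2 <= (nh x * nh y) ^+ 2.
Proof. by rewrite exprMn !norm_h_sqr; exact: (form_Cauchy_Schwarz inner_linear inner_conj inner_ge0). Qed.

Lemma Cauchy_Schwarz x y : `| << x, y >> | <= (nh x * nh y)%:C.
Proof.
rewrite normc_def lecR; apply: le_sqr_ge0; first by rewrite mulr_ge0 ?norm_h_ge0.
by rewrite sqr_sqrtr ?addr_ge0 ?sqr_ge0 ?Cauchy_Schwarz_sqr.
Qed.

Lemma normr_Re_inner_le x y : `|Re << x, y >>| <= nh x * nh y.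
Proof.
apply: le_sqr_ge0; first by rewrite mulr_ge0 ?norm_h_ge0.
have := Cauchy_Schwarz_sqr x y; have := sqr_ge0 (Im << x, y >>).
rewrite real_normK ?num_real //; lra.
Qed.

Lemma Re_inner_le x y : Re << x, y >> <= nh x * nh y.
Proof. exact: le_trans (ler_norm _) (normr_Re_inner_le x y). Qed.

Lemma norm_h_lbound (c : R) u f : c * nh f ^+ 2 <= Re << u, f >> -> c * nh f <= nh u.
Proof.
move=> /le_trans /(_ (Re_inner_le u f)).
have [->|nf_neq0] := eqVneq (nh f) 0; first by rewrite !mulr0 norm_h_ge0.
have nf_gt0 : 0 < nh f by rewrite lt_neqAle eq_sym nf_neq0 norm_h_ge0.
by rewrite expr2 mulrA ler_pM2r.
Qed.

End InnerProduct.

Section LinearMaps.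
Variables (R : rcfType) (V W : lmodType R[i]) (T : V -> W).
Hypothesis T_linear : linear T.

Lemma lin0 : T 0 = 0.
Proof.
have := T_linear 1 0 0; rewrite scaler0 addr0 scale1r => /eqP.
by rewrite -subr_eq0 opprD addrA subrr sub0r oppr_eq0 => /eqP.
Qed.

Lemma linZ a x : T (a *: x) = a *: T x.
Proof. by rewrite -(addr0 (a *: x)) T_linear lin0 addr0. Qed.

Lemma linD x y : T (x + y) = T x + T y.
Proof. by rewrite -(scale1r x) T_linear !scale1r. Qed.

End LinearMaps.

Section Operators.
Variables (R : realType) (H : lmodType R[i]) (hH : hilbert H).
Local Notation "<< x , y >>" := (inner hH x y).
Local Notation nh := (norm_h hH).
Local Notation selfadjoint T := (is_adjoint hH hH T T).
Implicit Types (T U : H -> H) (c M : R).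

Definition positive_op T := forall f, 0 <= << T f, f >>.
Definition coercive T c := forall f, (c * nh f ^+ 2)%:C <= << T f, f >>.
Definition form_le T M := forall f, Re << T f, f >> <= M * nh f ^+ 2.
Definition op_norm_le T M := forall f, nh (T f) <= M * nh f.

Lemma selfadjoint_form_real T : selfadjoint T -> forall f, << T f, f >> = (Re << T f, f >>)%:C.
Proof. by move=> T_sa f; apply: conj_fixed_real; rewrite -inner_conj T_sa. Qed.

Lemma coercive_of_Re T c : selfadjoint T ->
  (forall f, c * nh f ^+ 2 <= Re << T f, f >>) -> coercive T c.
Proof. by move=> T_sa T_ge f; rewrite selfadjoint_form_real // lecR. Qed.

Lemma positive_of_Re T : selfadjoint T ->
  (forall f, 0 <= Re << T f, f >>) -> positive_op T.
Proof. by move=> T_sa T_ge f; rewrite selfadjoint_form_real // ler0c. Qed.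

Lemma coercive_norm_lbound T c : coercive T c -> forall f, c * nh f <= nh (T f).
Proof. by move=> T_co f; apply: norm_h_lbound; exact: lecRe. Qed.

Lemma normr_Re_form_le T M : op_norm_le T M -> forall f, `|Re << T f, f >>| <= M * nh f ^+ 2.
Proof.
move=> T_le f; apply: le_trans (normr_Re_inner_le _ _ _) _.
by rewrite expr2 mulrA ler_wpM2r ?norm_h_ge0.
Qed.

Lemma form_le_of_op_norm_le T M : op_norm_le T M -> form_le T M.
Proof. by move=> T_le f; apply: le_trans (ler_norm _) (normr_Re_form_le T_le f). Qed.

Lemma op_norm_le_comp T U M N : 0 <= M ->
  op_norm_le T M -> op_norm_le U N -> op_norm_le (fun f => T (U f)) (M * N).
Proof.
move=> M_ge0 T_le U_le f; apply: le_trans (T_le _) _.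
by rewrite -mulrA ler_wpM2l.
Qed.

Lemma coercive_positive T c : 0 <= c -> coercive T c -> positive_op T.
Proof. by move=> c_ge0 T_co f; apply: le_trans (T_co f); rewrite ler0c mulr_ge0 ?sqr_ge0. Qed.

Lemma form_le_complex T M : selfadjoint T -> form_le T M ->
  forall f, << T f, f >> <= (M * nh f ^+ 2)%:C.
Proof. by move=> T_sa T_le f; rewrite selfadjoint_form_real // lecR. Qed.

Section PositiveOperator.
Variables (T : H -> H) (M : R).
Hypotheses (T_linear : linear T) (T_sa : selfadjoint T) (T_pos : positive_op T).
Hypotheses (M_ge0 : 0 <= M) (T_form_le : form_le T M).

(* Cauchy-Schwarz for the positive form [<<T x, y>>]: [<<T f, T f>>^2 <= <<T f, f>> <<T (T f), T f>>]. *)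
Lemma norm_sqr_le_form f : nh (T f) ^+ 2 <= M * Re << T f, f >>.
Proof.
have q_linear a x y z : << T (a *: x + y), z >> = a * << T x, z >> + << T y, z >>.
  by rewrite T_linear inner_linear.
have q_hermitian x y : << T y, x >> = << T x, y >>^*.
  by rewrite T_sa inner_conj.
have := form_Cauchy_Schwarz q_linear q_hermitian T_pos f (T f).
rewrite inner_self /= expr0n /= addr0.
have Tf_ge0 : 0 <= Re << T f, f >> by apply: Re_ge0.
move=> /le_trans /(_ (ler_wpM2l Tf_ge0 (T_form_le (T f)))).
have [->|Tf_neq0] := eqVneq (nh (T f)) 0; first by rewrite expr0n mulr_ge0.
have Tf_gt0 : 0 < nh (T f) ^+ 2 by rewrite exprn_gt0 // lt_neqAle eq_sym Tf_neq0 norm_h_ge0.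
set n2 := nh (T f) ^+ 2 in Tf_gt0 *.
by rewrite -[n2 ^+ 2]/(n2 * n2) [_ * (M * _)]mulrCA mulrA (ler_pM2r Tf_gt0).
Qed.

Lemma positive_coercive g : 0 < M -> 0 <= g -> (forall f, g * nh f <= nh (T f)) ->
  coercive T (g ^+ 2 / M).
Proof.
move=> M_gt0 g_ge0 T_ge; apply: coercive_of_Re => // f.
rewrite mulrAC ler_pdivrMr // -exprMn [_ * M]mulrC.
apply: le_trans (norm_sqr_le_form f).
by rewrite ler_sqr ?nnegrE ?mulr_ge0 ?norm_h_ge0.
Qed.

Lemma op_norm_le_of_form_le : op_norm_le T M.
Proof.
move=> f; apply: le_sqr_ge0; first by rewrite mulr_ge0 ?norm_h_ge0.
apply: le_trans (norm_sqr_le_form f) _.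
by rewrite exprMn expr2 -mulrA ler_wpM2l.
Qed.

End PositiveOperator.

Lemma selfadjoint_of_real_form T : linear T ->
  (forall f, << T f, f >> = << f, T f >>) -> selfadjoint T.
Proof.
move=> T_linear T_real x y.
have e1 := T_real (x + y); have e2 := T_real (x + 'i *: y).
rewrite !(linD T_linear) !(linZ T_linear) !innerDl !innerDr !innerZl !innerZr conjCi in e1 e2.
rewrite (T_real x) (T_real y) in e1 e2.
move: e1 e2; set p := << x, T x >>; set q := << y, T y >>.
set a2 := << T x, y >>; set a3 := << T y, x >>; set b2 := << x, T y >>; set b3 := << y, T x >>.
move=> e1 e2.
(* [x + y] and [x + i y] give two linear equations in [a2 - b2] and [a3 - b3]. *)
have : 2 * (a2 - b2) = 0.
  have -> : 2 * (a2 - b2) =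
     (p + a2 + (a3 + q) - (p + b2 + (b3 + q)))
     + 'i * (p + - 'i * a2 + ('i * a3 + 'i * (- 'i * q))
             - (p + - 'i * b2 + ('i * b3 + 'i * (- 'i * q))))
     + (('i : R[i]) ^+ 2 + 1) * ((a2 - b2) - (a3 - b3)) by ring.
  by rewrite e1 e2 sqrCi addNr !subrr mulr0 mul0r !addr0.
by move/eqP; rewrite mulf_eq0 pnatr_eq0 /= subr_eq0 => /eqP.
Qed.

Lemma GLplus_props T : GLplus hH T ->
  [/\ linear T, selfadjoint T, (exists2 M, 0 <= M & op_norm_le T M)
    & (exists2 c, 0 < c & coercive T c)].
Proof.
case=> [[T_linear [M T_le]] [T_gt0 [Ti [[_ [Mi Ti_le]] [TK _]]]]].
have T_pos : positive_op T.
  move=> f; have [->|f_neq0] := eqVneq f 0; first by rewrite (lin0 T_linear) inner0l.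
  by apply: ltW; apply: T_gt0; apply/eqP.
have T_sa : selfadjoint T.
  apply: selfadjoint_of_real_form => // f.
  by rewrite [RHS]inner_conj (ge0_complex_real (T_pos f)) conj_real.
have T_le1 : op_norm_le T (`|M| + 1).
  move=> f; apply: le_trans (T_le f) _; apply: ler_wpM2r; first exact: norm_h_ge0.
  by rewrite ler_wpDr // ler_norm.
have T_ge f : (`|Mi| + 1)^-1 * nh f <= nh (T f).
  rewrite mulrC ler_pdivrMr ?ltr_wpDl // mulrC.
  have := Ti_le (T f); rewrite TK => /le_trans; apply; apply: ler_wpM2r.
    exact: norm_h_ge0.
  by rewrite ler_wpDr // ler_norm.
split => //; first by exists (`|M| + 1); rewrite ?addr_ge0.
exists ((`|Mi| + 1)^-1 ^+ 2 / (`|M| + 1)); first by rewrite divr_gt0 ?exprn_gt0 ?invr_gt0 ?ltr_wpDl.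
apply: positive_coercive; rewrite ?invr_ge0 ?addr_ge0 ?ltr_wpDl //.
exact: form_le_of_op_norm_le.
Qed.

Section CommutingProduct.
Variables (X Y : H -> H) (al be MX MY : R).
Hypotheses (X_linear : linear X) (Y_linear : linear Y).
Hypotheses (X_sa : selfadjoint X) (Y_sa : selfadjoint Y).
Hypothesis XY_comm : forall f, X (Y f) = Y (X f).
Hypotheses (al_gt0 : 0 < al) (be_gt0 : 0 < be) (MX_ge0 : 0 <= MX) (MY_ge0 : 0 <= MY).
Hypotheses (X_co : coercive X al) (Y_co : coercive Y be).
Hypotheses (X_le : op_norm_le X MX) (Y_le : op_norm_le Y MY).

Definition segment t f := (1 - t)%:C *: X f + t%:C *: X (Y f).

Let M := MX + MX * MY + 1.
Let m := Num.min 1 be.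
Let g := al * m.
Let c := g ^+ 2 / M.

Let M_gt0 : 0 < M. Proof. by rewrite /M ltr_wpDl // addr_ge0 ?mulr_ge0. Qed.
Let m_gt0 : 0 < m. Proof. by rewrite /m lt_min ltr01. Qed.
Let c_gt0 : 0 < c. Proof. by rewrite /c divr_gt0 ?exprn_gt0 ?mulr_gt0. Qed.

Lemma XY_selfadjoint : selfadjoint (fun f => X (Y f)).
Proof. by move=> x y; rewrite X_sa Y_sa -XY_comm. Qed.

Lemma XY_le : op_norm_le (fun f => X (Y f)) (MX * MY).
Proof. exact: op_norm_le_comp. Qed.

Lemma segment_linear t : linear (segment t).
Proof.
move=> a x y; rewrite /segment Y_linear !X_linear !scalerDr !scalerA.
rewrite !(mulrC _ a) -!scalerA.
by rewrite !addrA; congr (_ + _); rewrite -!addrA; congr (_ + _); rewrite addrC.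
Qed.

Lemma segment_selfadjoint t : selfadjoint (segment t).
Proof.
move=> x y; rewrite /segment innerDl innerDr !innerZl !innerZr !conj_real.
by rewrite X_sa XY_selfadjoint.
Qed.

Lemma Re_segment t f :
  Re << segment t f, f >> = (1 - t) * Re << X f, f >> + t * Re << X (Y f), f >>.
Proof. by rewrite /segment innerDl !innerZl ReD !Re_realM. Qed.

Lemma segment_form_le t : 0 <= t <= 1 -> form_le (segment t) M.
Proof.
move=> /andP[t_ge0 t_le1] u; rewrite Re_segment.
have Xu_le := form_le_of_op_norm_le X_le u.
have XYu_le := form_le_of_op_norm_le XY_le u.
have n2_ge0 := sqr_ge0 (nh u); have MXY_ge0 := mulr_ge0 MX_ge0 MY_ge0.
set a := Re _ in Xu_le *; set b := Re _ in XYu_le *; set n2 := nh u ^+ 2 in n2_ge0 Xu_le XYu_le *.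
have : (1 - t) * a <= (1 - t) * (MX * n2) by rewrite ler_wpM2l ?subr_ge0.
have : t * b <= t * (MX * MY * n2) by rewrite ler_wpM2l.
have : 0 <= t * (MX * n2) by apply: mulr_ge0 => //; apply: mulr_ge0.
have : 0 <= (1 - t) * (MX * MY * n2) by apply: mulr_ge0; [rewrite subr_ge0 | apply: mulr_ge0].
rewrite /M; nra.
Qed.

Lemma segment_norm_lbound t : 0 <= t <= 1 -> forall f, g * nh f <= nh (segment t f).
Proof.
move=> /andP[t_ge0 t_le1] f.
pose h := (1 - t)%:C *: f + t%:C *: Y f.
have -> : segment t f = X h by rewrite /segment /h (linD X_linear) !(linZ X_linear).
apply: le_trans (coercive_norm_lbound X_co h); rewrite /g -mulrA ler_wpM2l ?(ltW al_gt0) //.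
apply: norm_h_lbound; rewrite /h innerDl !innerZl ReD !Re_realM inner_self /=.
have m_le1 : m <= 1 by rewrite /m ge_min lexx.
have m_le_be : m <= be by rewrite /m ge_min lexx orbT.
have := lecRe (Y_co f); have := sqr_ge0 (nh f).
set y := Re _; set n2 := nh f ^+ 2 => n2_ge0 Yf_ge.
have : 0 <= (1 - t) * ((1 - m) * n2).
  by apply: mulr_ge0; [rewrite subr_ge0 | apply: mulr_ge0; rewrite ?subr_ge0].
have : 0 <= t * (y - m * n2).
  by apply: mulr_ge0; rewrite // subr_ge0 (le_trans _ Yf_ge) // ler_wpM2r.
lra.
Qed.

Lemma segment_coercive t : 0 <= t <= 1 -> positive_op (segment t) -> coercive (segment t) c.
Proof.
move=> t01 seg_pos; apply: positive_coercive.
- exact: segment_linear.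
- exact: segment_selfadjoint.
- exact: seg_pos.
- exact: ltW M_gt0.
- exact: segment_form_le.
- exact: M_gt0.
- exact: mulr_ge0 (ltW al_gt0) (ltW m_gt0).
- exact: segment_norm_lbound.
Qed.

Lemma segment_positive_step t d : 0 <= t <= 1 -> 0 <= d -> d * M <= c ->
  positive_op (segment t) -> positive_op (segment (t + d)).
Proof.
move=> t01 d_ge0 dM_le seg_pos; apply: positive_of_Re; first exact: segment_selfadjoint.
move=> f; have := lecRe (segment_coercive t01 seg_pos f); rewrite !Re_segment.
have Xf_le := form_le_of_op_norm_le X_le f.
have := normr_Re_form_le XY_le f; rewrite ler_norml => /andP[XYf_ge _].
have n2_ge0 := sqr_ge0 (nh f); have MXY_ge0 := mulr_ge0 MX_ge0 MY_ge0.
set a := Re _ in Xf_le *; set b := Re _ in XYf_ge *; set n2 := nh f ^+ 2 in n2_ge0 Xf_le XYf_ge *.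
have : d * M * n2 <= c * n2 by rewrite ler_wpM2r.
have : 0 <= d * n2 by rewrite mulr_ge0.
rewrite /M; nra.
Qed.

Lemma coercive_comm_product : exists2 c, 0 < c & coercive (fun f => X (Y f)) c.
Proof.
pose N := (Num.truncn (M / c)).+1.
have N_gt0 : 0 < (N%:R : R) by rewrite ltr0n.
have dM_le : N%:R^-1 * M <= c.
  rewrite mulrC ler_pdivrMr // mulrC -ler_pdivrMr //; apply: ltW; exact: truncnS_gt.
have seg_pos n : (n <= N)%N -> positive_op (segment (n%:R / N%:R)).
  elim: n => [_|n IHn le_nN].
    apply: positive_of_Re; first exact: segment_selfadjoint.
    move=> f; rewrite mul0r Re_segment subr0 mul1r mul0r addr0.
    by apply: le_trans (lecRe (X_co f)); rewrite mulr_ge0 ?sqr_ge0 ?ltW.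
  rewrite -natr1 mulrDl mul1r; apply: segment_positive_step => //.
  - by rewrite divr_ge0 ?ler0n // ler_pdivrMr // mul1r ler_nat ltnW.
  - by rewrite invr_ge0 ltW.
  - by apply: IHn; rewrite ltnW.
exists c => [|f]; first exact: c_gt0.
have := segment_coercive _ (seg_pos N (leqnn N)) f.
rewrite divff ?gt_eqF // /segment subrr scale0r add0r scale1r; apply.
by rewrite ler01 lexx.
Qed.

End CommutingProduct.
End Operators.

Section Summation.
Variables (K : numFieldType) (I : int -> Prop).
Implicit Types (a b : int -> K) (s t : K).
Local Notation normK := (@Num.norm K K).

Lemma has_sum_ext (V : zmodType) (nrm : V -> K) (u v : int -> V) (s : V) :
  (forall i, I i -> u i = v i) -> has_sum nrm I u s -> has_sum nrm I v s.
Proof.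
move=> eq_uv u_sum e e_gt0; have [F0 [F0_I F0_sum]] := u_sum e e_gt0.
exists F0; split => // F F_uniq F_I F0_F.
rewrite -(eq_big_seq _ (fun i i_F => eq_uv i (F_I i i_F))); exact: F0_sum.
Qed.

Lemma index_union (F1 F2 : seq int) :
  (forall i, i \in F1 -> I i) -> (forall i, i \in F2 -> I i) ->
  let F := undup (F1 ++ F2) in
  [/\ uniq F, (forall i, i \in F -> I i), (forall i, i \in F1 -> i \in F) &
     (forall i, i \in F2 -> i \in F)].
Proof.
move=> F1_I F2_I F; split; first exact: undup_uniq.
- by move=> i; rewrite mem_undup mem_cat => /orP[/F1_I|/F2_I].
- by move=> i i_F1; rewrite mem_undup mem_cat i_F1.
- by move=> i i_F2; rewrite mem_undup mem_cat i_F2 orbT.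
Qed.

Lemma has_sum_unique a s t : has_sum normK I a s -> has_sum normK I a t -> s = t.
Proof.
move=> a_s a_t; apply/eqP; apply/negPn/negP => s_neq_t.
pose e := `|s - t| / 2.
have e_gt0 : 0 < e by rewrite divr_gt0 // normr_gt0 subr_eq0.
have [F1 [F1_I F1_sum]] := a_s e e_gt0; have [F2 [F2_I F2_sum]] := a_t e e_gt0.
have [F_uniq F_I F1_F F2_F] := index_union F1_I F2_I.
set F := undup _ in F_uniq F_I F1_F F2_F.
have : `|s - t| < e + e.
  have -> : s - t = (\sum_(i <- F) a i - t) - (\sum_(i <- F) a i - s) by ring.
  by apply: le_lt_trans (ler_normB _ _) _; rewrite ltrD ?F1_sum ?F2_sum.
have -> : e + e = `|s - t| by rewrite /e; field.
by rewrite ltxx.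
Qed.

Lemma has_sum_scaleD a b s t (k : K) : has_sum normK I a s -> has_sum normK I b t ->
  has_sum normK I (fun i => k * a i + b i) (k * s + t).
Proof.
move=> a_s b_t e e_gt0.
pose k1 := `|k| + 1.
have k1_gt0 : 0 < k1 by rewrite ltr_wpDl.
have [F1 [F1_I F1_sum]] := a_s (e / (2 * k1)) (divr_gt0 e_gt0 (mulr_gt0 (ltr0Sn K 1) k1_gt0)).
have [F2 [F2_I F2_sum]] := b_t (e / 2) (divr_gt0 e_gt0 (ltr0Sn K 1)).
have [_ F_I F1_F F2_F] := index_union F1_I F2_I.
exists (undup (F1 ++ F2)); split => // G G_uniq G_I F_G.
have a_G := F1_sum G G_uniq G_I (fun i i_F1 => F_G i (F1_F i i_F1)).
have b_G := F2_sum G G_uniq G_I (fun i i_F2 => F_G i (F2_F i i_F2)).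
rewrite big_split /= -mulr_sumr.
have -> : k * \sum_(i <- G) a i + \sum_(i <- G) b i - (k * s + t) =
  k * (\sum_(i <- G) a i - s) + (\sum_(i <- G) b i - t) by ring.
apply: le_lt_trans (ler_normD _ _) _; rewrite normrM.
have -> : e = k1 * (e / (2 * k1)) + e / 2 by field; rewrite gt_eqF.
apply: ler_ltD => //; apply: ler_pM; rewrite ?normr_ge0 ?(ltW a_G) //.
by rewrite lerDl.
Qed.

End Summation.

Section ComplexSummation.
Variables (R : rcfType) (I : int -> Prop).

Lemma has_sum_real_complex (a : int -> R) s :
  has_sum (@Num.norm R R) I a s -> has_sum (@Num.norm R[i] R[i]) I (fun i => (a i)%:C) s%:C.
Proof.
move=> a_s e; rewrite ltcE => /andP[/eqP Im_e Re_e_gt0].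
have [F0 [F0_I F0_sum]] := a_s _ Re_e_gt0; exists F0; split => // F F_uniq F_I F0_F.
rewrite -rmorph_sum -rmorphB normc_real ltcE /= Im_e eqxx; exact: F0_sum.
Qed.

Lemma has_sum_conj (a : int -> R[i]) s :
  has_sum (@Num.norm R[i] R[i]) I a s -> has_sum (@Num.norm R[i] R[i]) I (fun i => (a i)^*) s^*.
Proof.
move=> a_s e e_gt0; have [F0 [F0_I F0_sum]] := a_s _ e_gt0; exists F0; split => // F F_uniq F_I F0_F.
by rewrite -rmorph_sum -rmorphB norm_conjC; exact: F0_sum.
Qed.

End ComplexSummation.

Section FrameOperator.
Variables (R : realType) (H : lmodType R[i]) (hH : hilbert H) (I : int -> Prop).
Variables (Hi : int -> lmodType R[i]) (hHi : forall i, hilbert (Hi i)).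
Variables (L : forall i, H -> Hi i) (Ls : forall i, Hi i -> H) (S : H -> H).
Arguments Ls : clear implicits.
Local Notation "<< x , y >>" := (inner hH x y).
Local Notation nh := (norm_h hH).
Hypothesis L_adj : forall i, I i -> is_adjoint hH (hHi i) (L i) (Ls i).
Hypothesis S_sum : forall f, has_sum nh I (fun i => Ls i (L i f)) (S f).

Lemma inner_suml (F : seq int) (v : int -> H) g :
  << \sum_(i <- F) v i, g >> = \sum_(i <- F) << v i, g >>.
Proof.
elim: F => [|j F IH]; first by rewrite !big_nil inner0l.
by rewrite !big_cons innerDl IH.
Qed.

Lemma frame_operator_inner f g :
  has_sum (@Num.norm R[i] R[i]) I (fun i => inner (hHi i) (L i f) (L i g)) << S f, g >>.
Proof.
move=> e; rewrite ltcE => /andP[/eqP Im_e Re_e_gt0].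
pose k := nh g + 1.
have k_gt0 : 0 < k by rewrite ltr_wpDl ?norm_h_ge0.
have [F0 [F0_I F0_sum]] := S_sum f (divr_gt0 Re_e_gt0 k_gt0).
exists F0; split => // F F_uniq F_I F0_F.
have -> : \sum_(i <- F) inner (hHi i) (L i f) (L i g) = \sum_(i <- F) << Ls i (L i f), g >>.
  by apply: eq_big_seq => i /F_I I_i; rewrite [RHS]inner_conj -L_adj // -inner_conj.
rewrite -inner_suml -innerBl; apply: le_lt_trans (Cauchy_Schwarz _ _ _) _.
rewrite ltcE /= Im_e eqxx /=.
apply: le_lt_trans (ler_wpM2r (norm_h_ge0 _ _) (ltW (F0_sum F F_uniq F_I F0_F))) _.
rewrite -[X in _ < X](divfK (lt0r_neq0 k_gt0)) ltr_pM2l ?divr_gt0 //.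
by rewrite ltrDl.
Qed.

Lemma frame_operator_selfadjoint : is_adjoint hH hH S S.
Proof.
move=> x y; rewrite [RHS]inner_conj.
apply: (has_sum_unique (frame_operator_inner x y)).
apply: has_sum_ext (has_sum_conj (frame_operator_inner y x)) => i _.
by rewrite -inner_conj.
Qed.

Lemma frame_operator_linear : (forall i, I i -> linear (L i)) -> linear S.
Proof.
move=> L_linear a x y.
set d := S (a *: x + y) - (a *: S x + S y).
have d_orth h : << d, h >> = 0.
  rewrite innerBl innerDl innerZl; apply/eqP; rewrite subr_eq0; apply/eqP.
  apply: (has_sum_unique (frame_operator_inner (a *: x + y) h)).
  apply: has_sum_ext (has_sum_scaleD a (frame_operator_inner x h) (frame_operator_inner y h)).
  by move=> i I_i; rewrite L_linear // inner_linear.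
by apply/eqP; rewrite -subr_eq0 -/d; apply/eqP; apply: (@ip_eq0 _ _ (hip hH)); exact: d_orth.
Qed.

Lemma frame_operator_props (A B : R) : (forall i, I i -> linear (L i)) -> 0 < A -> A <= B ->
  (forall f, exists s, has_sum (@Num.norm R R) I (fun i => norm_h (hHi i) (L i f) ^+ 2) s /\
     A * nh f ^+ 2 <= s /\ s <= B * nh f ^+ 2) ->
  [/\ linear S, is_adjoint hH hH S S, coercive hH S A & op_norm_le hH S B].
Proof.
move=> L_linear A_gt0 A_le_B S_bounds.
have S_linear := frame_operator_linear L_linear.
have S_sa := frame_operator_selfadjoint.
have S_form f : exists2 s, << S f, f >> = s%:C & A * nh f ^+ 2 <= s <= B * nh f ^+ 2.
  have [s [sum_s [A_le le_B]]] := S_bounds f; exists s; last by rewrite A_le le_B.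
  apply: (has_sum_unique (frame_operator_inner f f)).
  by apply: has_sum_ext (has_sum_real_complex sum_s) => i _; rewrite inner_self.
have S_co : coercive hH S A by move=> f; have [s -> /andP[A_le _]] := S_form f; rewrite lecR.
have S_le : form_le hH S B by move=> f; have [s -> /andP[_ le_B]] := S_form f.
split=> //; apply: op_norm_le_of_form_le => //.
- exact: coercive_positive (ltW A_gt0) S_co.
- exact: le_trans (ltW A_gt0) A_le_B.
Qed.

End FrameOperator.

Theorem mainTheorem2 (R : realType)
  (H : lmodType R[i]) (hH : hilbert H)
  (I : int -> Prop)
  (Hi : int -> lmodType R[i]) (hHi : forall i, hilbert (Hi i))
  (L : forall i, H -> Hi i)
  (S : H -> H) (Cop C'op : H -> H) :
  g_frame hH I hHi L ->
  g_frame_operator hH I hHi L S ->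
  GLplus hH Cop -> GLplus hH C'op ->
  (forall f, Cop (C'op f) = C'op (Cop f)) ->
  (forall f, Cop (S f) = S (Cop f)) ->
  (forall f, C'op (S f) = S (C'op f)) ->
  controlled_g_frame hH I hHi L Cop C'op.
Proof.
move=> [L_bounded [A [B [A_gt0 [A_le_B S_bounds]]]]] [Ls [L_adj S_sum]] C_GL C'_GL CC' CS C'S.
have L_linear i : I i -> linear (L i) by case/L_bounded.
have [S_linear S_sa S_co S_le] := frame_operator_props L_adj S_sum L_linear A_gt0 A_le_B S_bounds.
have [C_linear C_sa [MC MC_ge0 C_le] [cC cC_gt0 C_co]] := GLplus_props C_GL.
have [C'_linear C'_sa [MC' MC'_ge0 C'_le] [cC' cC'_gt0 C'_co]] := GLplus_props C'_GL.
have B_ge0 : 0 <= B := le_trans (ltW A_gt0) A_le_B.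
have SC_comm f : S (Cop f) = Cop (S f) by rewrite CS.
have SCC'_comm f : S (Cop (C'op f)) = C'op (S (Cop f)) by rewrite CC' C'S.
have SC_linear : linear (fun f => S (Cop f)) by move=> a x y; rewrite C_linear S_linear.
have SC_sa := XY_selfadjoint S_sa C_sa SC_comm.
have SC_le := op_norm_le_comp B_ge0 S_le C_le.
have [c1 c1_gt0 SC_co] := coercive_comm_product S_linear C_linear S_sa C_sa SC_comm
  A_gt0 cC_gt0 B_ge0 MC_ge0 S_co C_co S_le C_le.
have [c2 c2_gt0 SCC'_co] := coercive_comm_product SC_linear C'_linear SC_sa C'_sa SCC'_comm
  c1_gt0 cC'_gt0 (mulr_ge0 B_ge0 MC_ge0) MC'_ge0 SC_co C'_co SC_le C'_le.
have SCC'_form_le := form_le_of_op_norm_le (op_norm_le_comp (mulr_ge0 B_ge0 MC_ge0) SC_le C'_le).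
split.
  split=> //; exists B => f; have [s [sum_s [_ le_B]]] := S_bounds f; by exists s.
exists c2, (B * MC * MC'); split=> // f; exists (inner hH (S (Cop (C'op f))) f); split.
  by rewrite SCC'_comm C'_sa; exact: (frame_operator_inner L_adj S_sum).
split; first exact: SCC'_co.
exact: form_le_complex (XY_selfadjoint SC_sa C'_sa SCC'_comm) SCC'_form_le f.
Qed.
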